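(* Let $(C,\mathbf A)$ be an $\mathbf a$-output-stable pair ($C\in\mathcal L(\mathcal X,\mathcal Y)$, $\mathbf A\in\mathcal L(\mathcal X)^d$) and let $\mathcal G^{\mathbf a}_{C,\mathbf A}$ be its abelianized observability gramian. Then $$\mathcal G^{\mathbf a}_{C,\mathbf A}-A_1^*\mathcal G^{\mathbf a}_{C,\mathbf A}A_1-\cdots-A_d^*\mathcal G^{\mathbf a}_{C,\mathbf A}A_d\le C^*C.$$ Moreover, the following are equivalent: (1) equality holds in this inequality; (2) $\mathbf A$ is $C$-abelian, i.e. $C\mathbf A^v=C\mathbf A^u$ whenever $u,v\in\mathcal F_d$ with $\mathbf a(v)=\mathbf a(u)$; (3) $\mathcal G^{\mathbf a}_{C,\mathbf A}=\mathcal G_{C,\mathbf A}$.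
   Context: $\mathcal F_d$: free semigroup of words on $\{1,\dots,d\}$; for $v=i_N\cdots i_1$, $\mathbf A^v=A_{i_N}\cdots A_{i_1}$. The abelianization map $\mathbf a\colon\mathcal F_d\to\mathbb Z^d_+$ sends $i_N\cdots i_1$ to $(n_1,\dots,n_d)$ with $n_k=\#\{\ell:i_\ell=k\}$. For $\mathbf n\in\mathbb Z^d_+$: $|\mathbf n|=n_1+\cdots+n_d$, $\mathbf n!=n_1!\cdots n_d!$, $\boldsymbol\lambda^{\mathbf n}=\lambda_1^{n_1}\cdots\lambda_d^{n_d}$. The Arveson space $\mathcal H_{\mathcal Y}(k_d)$ consists of power series $f(\boldsymbol\lambda)=\sum_{\mathbf n}f_{\mathbf n}\boldsymbol\lambda^{\mathbf n}$ ($f_{\mathbf n}\in\mathcal Y$) with $\|f\|^2=\sum_{\mathbf n}\frac{\mathbf n!}{|\mathbf n|!}\|f_{\mathbf n}\|^2<\infty$ (reproducing kernel $1/(1-\langle\boldsymbol\lambda,\boldsymbol\zeta\rangle)$ on the unit ball of $\mathbb C^d$). $(C,\mathbf A)$ is $\mathbf a$-output-stable if $\widehat{\mathcal O}^{\mathbf a}_{C,\mathbf A}\colon x\mapsto\sum_{\mathbf n}\big(\sum_{v\in\mathbf a^{-1}(\mathbf n)}C\mathbf A^vx\big)\boldsymbol\lambda^{\mathbf n}$ (formally $C(I-\lambda_1A_1-\cdots-\lambda_dA_d)^{-1}x$) maps $\mathcal X$ boundedly into $\mathcal H_{\mathcal Y}(k_d)$; then $\mathcal G^{\mathbf a}_{C,\mathbf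 A}=(\widehat{\mathcal O}^{\mathbf a}_{C,\mathbf A})^*\widehat{\mathcal O}^{\mathbf a}_{C,\mathbf A}=\sum_{\mathbf n}\frac{\mathbf n!}{|\mathbf n|!}\sum_{u,v\in\mathbf a^{-1}(\mathbf n)}(\mathbf A^v)^*C^*C\mathbf A^u$. The (noncommutative) observability gramian is $\mathcal G_{C,\mathbf A}=\sum_{v\in\mathcal F_d}(\mathbf A^v)^*C^*C\mathbf A^v$ (strong operator sum). *)

From HB Require Import structures.
From mathcomp Require Import all_boot all_order all_algebra.
From mathcomp Require Import reals.
From mathcomp.real_closed Require Import complex.
Set Implicit Arguments. Unset Strict Implicit. Unset Printing Implicit Defensive.
Import Order.TTheory GRing.Theory Num.Theory.
Local Open Scope ring_scope.

Section Defs.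
Variable R : realType.
Local Notation K := (R[i]).

Definition is_hilbert (X : lmodType K) (ip : X -> X -> K) : Prop :=
  [/\ (forall (a : K) (x y z : X), ip (a *: x + y) z = a * ip x z + ip y z),
      (forall x y : X, ip x y = (ip y x)^*),
      (forall x : X, 0 <= ip x x),
      (forall x : X, ip x x = 0 -> x = 0) &
      (forall u : nat -> X,
         (forall e : K, 0 < e -> exists N, forall m n, (N <= m)%N -> (N <= n)%N ->
             ip (u m - u n) (u m - u n) < e) ->
         exists l : X, forall e : K, 0 < e -> exists N, forall n, (N <= n)%N ->
             ip (u n - l) (u n - l) < e)].

Definition bounded_linear (X Y : lmodType K) (ipX : X -> X -> K)
  (ipY : Y -> Y -> K) (f : X -> Y) : Prop :=
  (forall (a : K) (x y : X), f (a *: x + y) = a *: f x + f y) /\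
  (exists M : K, forall x, ipY (f x) (f x) <= M * ipX x x).

Definition is_adjoint (X Y : lmodType K) (ipX : X -> X -> K)
  (ipY : Y -> Y -> K) (f : X -> Y) (g : Y -> X) : Prop :=
  forall x y, ipY (f x) y = ipX x (g y).

Definition vconverges (X : lmodType K) (ipX : X -> X -> K) (u : nat -> X) (l : X) :=
  forall e : K, 0 < e -> exists N, forall n, (N <= n)%N -> ipX (u n - l) (u n - l) < e.

Definition sconverges (s : nat -> K) (l : K) :=
  forall e : K, 0 < e -> exists N, forall n, (N <= n)%N -> `|s n - l| < e.

Variable d : nat.

(* words of F_d are sequences [:: i_N; ...; i_1];  A^v = A_{i_N} ... A_{i_1} *)
Definition wact (X : Type) (A : 'I_d -> X -> X) (v : seq 'I_d) (x : X) : X :=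
  foldr (fun i y => A i y) x v.

(* (A^v)^* = A_{i_1}^* ... A_{i_N}^*, given the adjoints As i = (A i)^* *)
Definition wadj (X : Type) (As : 'I_d -> X -> X) (v : seq 'I_d) (x : X) : X :=
  foldl (fun y i => As i y) x v.

Definition abel (v : seq 'I_d) : {ffun 'I_d -> nat} := [ffun j => count_mem j v].

Definition mlen (n : {ffun 'I_d -> nat}) : nat := (\sum_(i < d) n i)%N.
Definition mfact (n : {ffun 'I_d -> nat}) : nat := (\prod_(i < d) (n i)`!)%N.

(* coefficient of lambda^n in  C (I - lambda_1 A_1 - ... - lambda_d A_d)^{-1} x *)
Definition ocoef (X Y : lmodType K) (C : X -> Y) (A : 'I_d -> X -> X)
  (n : {ffun 'I_d -> nat}) (x : X) : Y :=
  \sum_(t : (mlen n).-tuple 'I_d | abel t == n) C (wact A t x).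

Definition mweight (n : {ffun 'I_d -> nat}) : K :=
  (mfact n)%:R / ((mlen n)`!)%:R.

(* homogeneous degree-k part of the Arveson-space inner product
   < O^a x, O^a y >_{H_Y(k_d)} *)
Definition oblock (X Y : lmodType K) (ipY : Y -> Y -> K) (C : X -> Y)
  (A : 'I_d -> X -> X) (k : nat) (x y : X) : K :=
  \sum_(m : {ffun 'I_d -> 'I_k.+1} | (\sum_(i < d) (m i : nat))%N == k)
     let n := [ffun i => (m i : nat)] in
     mweight n * ipY (ocoef C A n x) (ocoef C A n y).

Definition opartial (X Y : lmodType K) (ipY : Y -> Y -> K) (C : X -> Y)
  (A : 'I_d -> X -> X) (N : nat) (x y : X) : K :=
  \sum_(k < N.+1) oblock ipY C A k x y.

(* (C, A) is a-output-stable: O^a_{C,A} maps X boundedly into H_Y(k_d) *)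
Definition a_output_stable (X Y : lmodType K) (ipX : X -> X -> K)
  (ipY : Y -> Y -> K) (C : X -> Y) (A : 'I_d -> X -> X) : Prop :=
  exists M : K, forall x N, opartial ipY C A N x x <= M * ipX x x.

(* G = (O^a)^* O^a, i.e. <G x, y>_X = <O^a x, O^a y>_{H_Y(k_d)} *)
Definition is_a_gramian (X Y : lmodType K) (ipX : X -> X -> K)
  (ipY : Y -> Y -> K) (C : X -> Y) (A : 'I_d -> X -> X) (G : X -> X) : Prop :=
  forall x y, sconverges (fun N => opartial ipY C A N x y) (ipX (G x) y).

(* partial sums  sum_{|v| <= N} (A^v)^* C^* C A^v x  of the noncommutative
   observability gramian *)
Definition ncpartial (X Y : lmodType K) (C : X -> Y) (Cs : Y -> X)
  (A As : 'I_d -> X -> X) (N : nat) (x : X) : X :=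
  \sum_(k < N.+1) \sum_(t : k.-tuple 'I_d) wadj As t (Cs (C (wact A t x))).

Definition C_abelian (X Y : Type) (C : X -> Y) (A : 'I_d -> X -> X) : Prop :=
  forall u v : seq 'I_d, abel u = abel v -> forall x, C (wact A v x) = C (wact A u x).

End Defs.

From HB Require Import structures.
From mathcomp Require Import all_boot all_order all_algebra.
From mathcomp Require Import reals.
From mathcomp.real_closed Require Import complex.
From mathcomp Require Import ring.
Set Implicit Arguments. Unset Strict Implicit. Unset Printing Implicit Defensive.
Import Order.TTheory GRing.Theory Num.Theory.
Local Open Scope ring_scope.

(* For a word s write obs x s = C A^s x, and obs_mean x s for the mean of obs x
   over the words with the same abelianization as s.  The degree-k block of
   <O^a x, O^a x> is the squared norm of obs_mean x on words of length k, the
   degree-k block of the noncommutative gramian is that of obs x, and by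
   Pythagoras their difference is the squared distance from obs x to obs_mean x.
   Splitting off the letter that acts first, the Stein defect
   ||C x||^2 + sum_i <G A_i x, A_i x> - <G x, x> becomes the sum of the series
   of squared norms ||obs_mean (A_i x) s - obs_mean x (s i)||^2.  This gives the
   inequality; equality makes every term vanish, whence obs x = obs_mean x by
   induction on the length of words, which is C-abelianness.  Norm convergence of
   the noncommutative partial sums S_N to G likewise forces obs x = obs_mean x.
   Conversely, for C-abelian A both gramians have the same blocks, so G - S_N is
   the tail of a series of positive forms, and the bound G <= M from output
   stability gives ||(G - S_N) x||^2 <= M <(G - S_N) x, x> -> 0. *)

Section InnerProduct.
Variable R : realType.
Local Notation K := (R[i]).
Variables (V : lmodType K) (ip : V -> V -> K).
Hypothesis hV : is_hilbert ip.

Lemma ipZDl a x y z : ip (a *: x + y) z = a * ip x z + ip y z.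
Proof. by case: hV. Qed.

Lemma ipC x y : ip x y = (ip y x)^*.
Proof. by case: hV. Qed.

Lemma ip_ge0 x : 0 <= ip x x.
Proof. by case: hV. Qed.

Lemma ip_eq0 x : ip x x = 0 -> x = 0.
Proof. by case: hV => _ _ _ + _; apply. Qed.

Lemma ipDl x y z : ip (x + y) z = ip x z + ip y z.
Proof. by have := ipZDl 1 x y z; rewrite scale1r mul1r. Qed.

Lemma ip0l z : ip 0 z = 0.
Proof. by have /esym/(canRL (addKr _)) := ipDl 0 0 z; rewrite addr0 addNr. Qed.

Lemma ipZl a x z : ip (a *: x) z = a * ip x z.
Proof. by rewrite -[a *: x]addr0 ipZDl ip0l addr0. Qed.

Lemma ipNl x z : ip (- x) z = - ip x z.
Proof. by rewrite -scaleN1r ipZl mulN1r. Qed.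

Lemma ipBl x y z : ip (x - y) z = ip x z - ip y z.
Proof. by rewrite ipDl ipNl. Qed.

Lemma ip_suml I (r : seq I) (P : pred I) (F : I -> V) z :
  ip (\sum_(i <- r | P i) F i) z = \sum_(i <- r | P i) ip (F i) z.
Proof. by apply: (big_morph (ip^~ z)); [move=> x y; apply: ipDl | apply: ip0l]. Qed.

Lemma ipDr x y z : ip z (x + y) = ip z x + ip z y.
Proof. by rewrite ipC ipDl rmorphD /= -!ipC. Qed.

Lemma ipZr a x z : ip z (a *: x) = a^* * ip z x.
Proof. by rewrite ipC ipZl rmorphM /= -ipC. Qed.

Lemma ip0r z : ip z 0 = 0.
Proof. by rewrite ipC ip0l rmorph0. Qed.

Lemma ipNr x z : ip z (- x) = - ip z x.
Proof. by rewrite ipC ipNl rmorphN /= -ipC. Qed.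

Lemma ipBr x y z : ip z (x - y) = ip z x - ip z y.
Proof. by rewrite ipDr ipNr. Qed.

Lemma ip_sumr I (r : seq I) (P : pred I) (F : I -> V) z :
  ip z (\sum_(i <- r | P i) F i) = \sum_(i <- r | P i) ip z (F i).
Proof. by apply: (big_morph (ip z)); [move=> x y; apply: ipDr | apply: ip0r]. Qed.

Lemma ip_inj u v : (forall y, ip u y = ip v y) -> u = v.
Proof. by move=> uv; apply/subr0_eq/ip_eq0; rewrite ipBl uv subrr. Qed.

Lemma ip_cauchy_schwarz w y : `|ip w y| ^+ 2 <= ip w w * ip y y.
Proof.
have [/ip_eq0 ->|y_neq0] := eqVneq (ip y y) 0.
  by rewrite ip0r normr0 expr0n ip0r mulr0.
have y_gt0 : 0 < ip y y by rewrite lt_def y_neq0 ip_ge0.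
set a := ip y y; set t := ip w y.
have E : ip (a *: w - t *: y) (a *: w - t *: y) = a * (ip w w * a - t * t^*).
  by rewrite ipBl !ipBr !ipZl !ipZr (geC0_conj (ip_ge0 y)) -/a -/t [ip y w]ipC; ring.
by have := ip_ge0 (a *: w - t *: y); rewrite E normCK pmulr_rge0 // subr_ge0.
Qed.

End InnerProduct.

Lemma adjoint_ipl (R : realType) (X Y : lmodType R[i])
  (ipX : X -> X -> R[i]) (ipY : Y -> Y -> R[i]) (f : X -> Y) (g : Y -> X) :
  is_hilbert ipX -> is_hilbert ipY -> is_adjoint ipX ipY f g ->
  forall y x, ipX (g y) x = ipY y (f x).
Proof. by move=> hX hY fg y x; rewrite (ipC hX) -fg -(ipC hY). Qed.

Section ScalarLimits.
Variable R : realType.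
Local Notation K := (R[i]).
Implicit Types (f g : nat -> K) (a b : K).

Lemma sconv_ext f g a : f =1 g -> sconverges f a -> sconverges g a.
Proof. by move=> fg fa e /fa[N HN]; exists N => n /HN; rewrite fg. Qed.

Lemma sconv_cst a : sconverges (fun=> a) a.
Proof. by move=> e e_gt0; exists 0%N => n _; rewrite subrr normr0. Qed.

Lemma sconvD f g a b : sconverges f a -> sconverges g b ->
  sconverges (fun n => f n + g n) (a + b).
Proof.
move=> fa gb e e_gt0; have e2_gt0 : 0 < e / 2 by rewrite divr_gt0.
have [[N1 H1] [N2 H2]] := (fa _ e2_gt0, gb _ e2_gt0).
exists (maxn N1 N2) => n; rewrite geq_max => /andP[/H1 n1 /H2 n2].
rewrite opprD addrACA (splitr e).
by apply: le_lt_trans (ler_normD _ _) _; rewrite ltrD.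
Qed.

Lemma sconvZ c f a : sconverges f a -> sconverges (fun n => c * f n) (c * a).
Proof.
move=> fa e e_gt0; have c1_gt0 : 0 < `|c| + 1 by rewrite ltr_pwDr.
have [N HN] := fa _ (divr_gt0 e_gt0 c1_gt0).
exists N => n /HN; rewrite -mulrBr normrM ltr_pdivlMr // => lt_e.
apply: le_lt_trans lt_e; rewrite mulrC ler_wpM2l //.
by rewrite lerDl.
Qed.

Lemma sconvB f g a b : sconverges f a -> sconverges g b ->
  sconverges (fun n => f n - g n) (a - b).
Proof.
move=> fa /(sconvZ (-1)); rewrite mulN1r => gb.
by apply: sconv_ext (sconvD fa gb) => n; rewrite mulN1r.
Qed.

Lemma sconv_sum (I : Type) (r : seq I) (P : pred I) (F : I -> nat -> K) (L : I -> K) :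
  (forall i, sconverges (F i) (L i)) ->
  sconverges (fun n => \sum_(i <- r | P i) F i n) (\sum_(i <- r | P i) L i).
Proof.
move=> FL; elim: r => [|i r IH].
  by rewrite big_nil; apply: sconv_ext (sconv_cst 0) => n; rewrite big_nil.
rewrite big_cons; case Pi: (P i).
  by apply: sconv_ext (sconvD (FL i) IH) => n; rewrite big_cons Pi.
by apply: sconv_ext IH => n; rewrite big_cons Pi.
Qed.

Lemma sconv_shift f a : sconverges f a -> sconverges (fun n => f n.+1) a.
Proof. by move=> fa e /fa[N HN]; exists N => n /leqW; apply: HN. Qed.

Lemma sconv_conj f a : sconverges f a -> sconverges (fun n => (f n)^*) a^*.
Proof. by move=> fa e /fa[N HN]; exists N => n /HN; rewrite -rmorphB norm_conjC. Qed.

Lemma sconv_uniq f a b : sconverges f a -> sconverges f b -> a = b.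
Proof.
move=> fa fb; apply/subr0_eq/normr0_eq0/le_anti; rewrite normr_ge0 andbT.
apply/ler_addgt0Pr => e e_gt0; rewrite add0r.
have e2_gt0 : 0 < e / 2 by rewrite divr_gt0.
have [[N1 H1] [N2 H2]] := (fa _ e2_gt0, fb _ e2_gt0).
have n1 := H1 _ (leq_maxl N1 N2); have n2 := H2 _ (leq_maxr N1 N2).
rewrite (splitr e); apply/ltW/(le_lt_trans (ler_distD (f (maxn N1 N2)) _ _)).
by rewrite distrC ltrD.
Qed.

(* In [R[i]], [0 <= a] says that [a] is real and nonnegative, i.e. [`|a| = a]. *)
Lemma sconv_ge0 f a N0 : (forall n, (N0 <= n)%N -> 0 <= f n) ->
  sconverges f a -> 0 <= a.
Proof.
move=> f_ge0 fa.
suff /eqP : `|a| - a = 0 by rewrite subr_eq0 => /eqP <-.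
apply/normr0_eq0/le_anti; rewrite normr_ge0 andbT.
apply/ler_addgt0Pr => e e_gt0; rewrite add0r.
have e2_gt0 : 0 < e / 2 by rewrite divr_gt0.
have [N HN] := fa _ e2_gt0.
have near_a := HN _ (leq_maxl N N0); have fn_ge0 := f_ge0 _ (leq_maxr N N0).
set x := f (maxn N N0) in near_a fn_ge0.
have -> : `|a| - a = (`|a| - `|x|) + (x - a) by rewrite (ger0_norm fn_ge0); ring.
rewrite (splitr e); apply/ltW/(le_lt_trans (ler_normD _ _)).
by rewrite ltrD // (le_lt_trans (ler_dist_dist _ _)) // distrC.
Qed.

Lemma sconv_le f g a b N0 : (forall n, (N0 <= n)%N -> f n <= g n) ->
  sconverges f a -> sconverges g b -> a <= b.
Proof.
move=> fg fa gb; rewrite -subr_ge0; apply: sconv_ge0 (sconvB gb fa).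
by move=> n /fg; rewrite subr_ge0.
Qed.

Lemma partial_sum_le_lim (q : nat -> K) L : (forall j, 0 <= q j) ->
  sconverges (fun N => \sum_(j < N.+1) q j) L -> forall N, \sum_(j < N.+1) q j <= L.
Proof.
move=> q_ge0 qL N; apply: (sconv_le (N0 := N)) (sconv_cst _) qL => M NM.
rewrite [leLHS](big_ord_widen _ _ (NM : (N.+1 <= M.+1)%N)).
by rewrite [leRHS](bigID (fun j : 'I_M.+1 => (j < N.+1)%N)) /= lerDl sumr_ge0.
Qed.

Lemma series_ge0_cvg0 (q : nat -> K) : (forall j, 0 <= q j) ->
  sconverges (fun N => \sum_(j < N.+1) q j) 0 -> forall k, q k = 0.
Proof.
move=> q_ge0 q0 k; apply/le_anti; rewrite q_ge0 andbT.
apply: le_trans (partial_sum_le_lim q_ge0 q0 k).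
by rewrite big_ord_recr /= lerDr sumr_ge0.
Qed.

Lemma vconv_ipl (V : lmodType K) (ip : V -> V -> K) (u : nat -> V) l y :
  is_hilbert ip -> vconverges ip u l -> sconverges (fun n => ip (u n) y) (ip l y).
Proof.
move=> hV ul e e_gt0.
have y1_gt0 : 0 < ip y y + 1 by rewrite ltr_pwDr ?(ip_ge0 hV).
have [N HN] := ul _ (divr_gt0 (exprn_gt0 2 e_gt0) y1_gt0).
exists N => n /HN lt_e2; rewrite -(ipBl hV).
rewrite -(ltr_pXn2r (n := 2)) ?nnegrE ?normr_ge0 ?ltW //.
apply: le_lt_trans (ip_cauchy_schwarz hV _ _) _.
apply: le_lt_trans (ler_wpM2r (ip_ge0 hV y) (ltW lt_e2)) _.
by rewrite -mulrA gtr_pMr ?exprn_gt0 // mulrC ltr_pdivrMr // mul1r ltrDl ltr01.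
Qed.

End ScalarLimits.

Section Words.
Variable d : nat.
Local Notation word k := (k.-tuple 'I_d).

Lemma eq_abel_perm (u v : seq 'I_d) : (abel u == abel v) = perm_eq u v.
Proof.
apply/eqP/idP => [uv|/permP uv]; last by apply/ffunP => j; rewrite !ffunE uv.
by apply/allP => j _ /=; move/ffunP: uv => /(_ j); rewrite !ffunE => ->.
Qed.

Lemma abel_rcons (u : seq 'I_d) i j : abel (rcons u i) j = (abel u j + (i == j))%N.
Proof. by rewrite !ffunE -cats1 count_cat /= addn0. Qed.

Lemma eq_abel_rcons (u v : seq 'I_d) i :
  (abel (rcons u i) == abel (rcons v i)) = (abel u == abel v).
Proof. by rewrite !eq_abel_perm perm_rcons perm_sym perm_rcons perm_sym perm_cons. Qed.

Lemma mlen_abel (s : seq 'I_d) : mlen (abel s) = size s.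
Proof.
elim: s => [|i s IH]; first by rewrite /mlen big1 // => j _; rewrite ffunE.
rewrite /= -IH /mlen (eq_bigr (fun j => (i == j) + abel s j)%N) => [|j _]; last first.
  by rewrite !ffunE.
rewrite big_split /= (bigD1 i) //= eqxx big1 // => j /negbTE.
by rewrite eq_sym => ->.
Qed.

Lemma mfact_abel_rcons (s : seq 'I_d) i :
  mfact (abel (rcons s i)) = (mfact (abel s) * (abel s i).+1)%N.
Proof.
rewrite /mfact (bigD1 i) //= [in RHS](bigD1 i) //= abel_rcons eqxx addn1 factS.
rewrite (eq_bigr (fun j => (abel s j)`!)) => [|j /negbTE ji]; last first.
  by rewrite abel_rcons eq_sym ji addn0.
by rewrite -mulnA mulnC.
Qed.

Lemma rcons_word_bij k : bijective (fun p : 'I_d * word k => rcons_tuple p.2 p.1).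
Proof.
apply: inj_card_bij => [[i s] [j t] /(congr1 val)/rcons_inj[/val_inj-> ->] //|].
by rewrite card_prod !card_tuple card_ord expnS.
Qed.

Lemma big_word_rcons (V : nmodType) k (F : word k.+1 -> V) :
  \sum_(t : word k.+1) F t = \sum_(i < d) \sum_(t : word k) F (rcons_tuple t i).
Proof. by rewrite (reindex _ (onW_bij _ (rcons_word_bij k))) pair_big. Qed.

Lemma word_rconsP k (t : word k.+1) : exists i (s : word k), t = rcons_tuple s i.
Proof.
by have [g _ gK] := rcons_word_bij k; exists (g t).1, (g t).2; rewrite [RHS]gK.
Qed.

Lemma card_abel_class k (s : word k) :
  (#|[pred u : word k | abel u == abel s]| * mfact (abel s))%N = k`!.
Proof.
elim: k s => [|k IH] s.
  rewrite (tuple0 s) /mfact big1 ?muln1 => [|j _]; last by rewrite ffunE.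
  rewrite (eq_card (B := predT)) ?card_tuple ?expn0 // => u.
  by rewrite !inE (tuple0 u) eqxx.
have class_rcons i : (#|[pred t : word k | abel (rcons t i) == abel s]|
                      * mfact (abel s) = k`! * abel s i)%N.
  have [si0|si_gt0] := posnP (abel s i).
    rewrite si0 muln0 eq_card0 ?mul0n // => t; rewrite inE.
    by apply/negP => /eqP/ffunP/(_ i); rewrite abel_rcons si0 eqxx addn1.
  have i_in_s : i \in (s : seq 'I_d) by move: si_gt0; rewrite ffunE -has_count has_pred1.
  have size_rem_s : size (rem i s) == k by rewrite size_rem // size_tuple.
  pose s' : word k := Tuple size_rem_s.
  have -> : abel s = abel (rcons s' i).
    by apply/eqP; rewrite eq_abel_perm perm_sym perm_rcons perm_sym perm_to_rem.
  rewrite mfact_abel_rcons abel_rcons eqxx addn1 mulnA -(IH s').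
  by congr (_ * _ * _)%N; apply: eq_card => t; rewrite !inE eq_abel_rcons.
rewrite -sum1_card big_mkcond big_word_rcons big_distrl /=.
under eq_bigr => i _ do rewrite -big_mkcond sum1_card class_rcons.
rewrite -big_distrr /=.
have -> : (\sum_(i < d) abel s i)%N = k.+1.
  by rewrite -[RHS](size_tuple s) -mlen_abel.
by rewrite factS mulnC.
Qed.

Definition mval k (m : {ffun 'I_d -> 'I_k.+1}) : {ffun 'I_d -> nat} :=
  [ffun i => (m i : nat)].

Lemma big_abel_classes (V : nmodType) k (F : {ffun 'I_d -> nat} -> word k -> V) :
  \sum_(m : {ffun 'I_d -> 'I_k.+1} | (\sum_(i < d) (m i : nat))%N == k)
     \sum_(s : word k | abel s == mval m) F (mval m) s
  = \sum_(s : word k) F (abel s) s.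
Proof.
under eq_bigr => m _ do under eq_bigr => s /eqP <- do [].
rewrite (exchange_big_dep predT) //=; apply: eq_bigr => s _.
have count_lt i : (count_mem i s < k.+1)%N.
  by rewrite ltnS -[X in (_ <= X)%N](size_tuple s) count_size.
pose ms : {ffun 'I_d -> 'I_k.+1} := [ffun i => Ordinal (count_lt i)].
have abel_ms : abel s = mval ms by apply/ffunP => i; rewrite !ffunE.
rewrite (big_pred1 ms) // => m; apply/andP/eqP => [[_ /eqP/ffunP abel_m]|->].
  by apply/ffunP => i; apply: val_inj; have := abel_m i; rewrite !ffunE.
split; last by rewrite abel_ms.
rewrite -[X in _ == X](size_tuple s) -mlen_abel abel_ms.
by rewrite /mlen; apply/eqP; apply: eq_bigr => i _; rewrite [RHS]ffunE.
Qed.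

End Words.

Section ObservationsAlongWords.
Variables (R : realType) (d : nat).
Local Notation K := (R[i]).
Local Notation word k := (k.-tuple 'I_d).
Variables (X Y : lmodType K) (ipX : X -> X -> K) (ipY : Y -> Y -> K).
Hypotheses (hX : is_hilbert ipX) (hY : is_hilbert ipY).
Variables (C : X -> Y) (Cs : Y -> X) (A As : 'I_d -> X -> X).
Hypotheses (hCs : is_adjoint ipX ipY C Cs)
  (hAs : forall i, is_adjoint ipX ipX (A i) (As i)).

Definition obs x (s : seq 'I_d) : Y := C (wact A s x).

Definition obs_class k x (n : {ffun 'I_d -> nat}) : Y :=
  \sum_(u : word k | abel u == n) obs x u.

(* [mweight (abel s)] is the inverse of the size of the abelian class of [s]
   (card_abel_class), so [obs_mean x] averages [obs x] over abelian classes: it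
   is the orthogonal projection of [obs x] onto the functions of [abel]. *)
Definition obs_mean k x (s : word k) : Y :=
  mweight R (abel s) *: obs_class k x (abel s).

Definition ncblock k x y : K := \sum_(s : word k) ipY (obs x s) (obs y s).

Lemma mweight_conj (n : {ffun 'I_d -> nat}) : (mweight R n)^* = mweight R n.
Proof. by rewrite geC0_conj // divr_ge0 ?ler0n. Qed.

Lemma card_abel_class_mweight k (s : word k) :
  #|[pred u : word k | abel u == abel s]|%:R * mweight R (abel s) = 1.
Proof.
rewrite /mweight mlen_abel size_tuple mulrA -natrM card_abel_class divff //.
by rewrite pnatr_eq0 -lt0n fact_gt0.
Qed.

Lemma wact_rcons (t : seq 'I_d) i x : wact A (rcons t i) x = wact A t (A i x).
Proof. by rewrite /wact foldr_rcons. Qed.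

Lemma ip_wadj (t : seq 'I_d) z y : ipX (wadj As t z) y = ipX z (wact A t y).
Proof. by elim: t z => [|i t IH] z //=; rewrite IH (adjoint_ipl hX hX (hAs i)). Qed.

Lemma ncpartial_ip N x y :
  ipX (ncpartial C Cs A As N x) y = \sum_(k < N.+1) ncblock k x y.
Proof.
rewrite (ip_suml hX); apply: eq_bigr => k _; rewrite (ip_suml hX).
by apply: eq_bigr => t _; rewrite ip_wadj (adjoint_ipl hX hY hCs).
Qed.

Lemma ncblockS k x y : ncblock k.+1 x y = \sum_(i < d) ncblock k (A i x) (A i y).
Proof.
rewrite /ncblock big_word_rcons; apply: eq_bigr => i _; apply: eq_bigr => t _.
by rewrite /obs /= !wact_rcons.
Qed.

Lemma obs_mean_abel k x (u s : word k) : abel u = abel s -> obs_mean x u = obs_mean x s.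
Proof. by rewrite /obs_mean => ->. Qed.

Lemma obs_meanE k x (s : word k) :
  (forall u : word k, abel u = abel s -> obs x u = obs x s) -> obs_mean x s = obs x s.
Proof.
move=> obs_cst; rewrite /obs_mean /obs_class.
rewrite (eq_bigr (fun=> obs x s)) => [|u /eqP/obs_cst]//.
rewrite -[X in \sum_(u | X u) _]/(fun u => u \in [pred u : word k | abel u == abel s]).
by rewrite sumr_const -scaler_nat scalerA mulrC card_abel_class_mweight scale1r.
Qed.

Lemma obs_mean0 x (s : word 0) : obs_mean x s = obs x s.
Proof. by apply: obs_meanE => u _; rewrite (tuple0 u) (tuple0 s). Qed.

Lemma sum_ip_obs_mean k x (f : word k -> Y) :
  (forall u s : word k, abel u = abel s -> f u = f s) ->
  \sum_(s : word k) ipY (f s) (obs_mean x s) = \sum_(s : word k) ipY (f s) (obs x s).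
Proof.
move=> f_cst.
transitivity (\sum_(s : word k) \sum_(u : word k | abel u == abel s)
   mweight R (abel s) * ipY (f s) (obs x u)).
  apply: eq_bigr => s _.
  by rewrite /obs_mean (ipZr hY) mweight_conj (ip_sumr hY) mulr_sumr.
rewrite (exchange_big_dep predT) //=; apply: eq_bigr => u _.
transitivity (\sum_(s in [pred s : word k | abel s == abel u])
   mweight R (abel u) * ipY (f u) (obs x u)).
  apply: eq_big => [s|s /eqP us]; first by rewrite !inE eq_sym.
  by rewrite (f_cst s u) us.
by rewrite sumr_const -mulr_natl mulrA card_abel_class_mweight mul1r.
Qed.

Lemma ocoef_class k x n : mlen n = k -> ocoef C A n x = obs_class k x n.
Proof. by move=> <-. Qed.

Lemma oblockE k x y :
  oblock ipY C A k x y = \sum_(s : word k) ipY (obs_mean x s) (obs_mean y s).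
Proof.
pose F n (s : word k) :=
  mweight R n * (mweight R n * ipY (obs_class k x n) (obs_class k y n)).
transitivity (\sum_(s : word k) F (abel s) s); last first.
  by apply: eq_bigr => s _; rewrite (ipZl hY) (ipZr hY) mweight_conj.
rewrite -(big_abel_classes F); apply: eq_bigr => m /eqP mk /=.
have mlen_m : mlen (mval m) = k by rewrite -[RHS]mk; apply: eq_bigr => i _; rewrite ffunE.
rewrite -/(mval m) !(ocoef_class _ mlen_m).
have [s0 /eqP <-|no_word] := pickP [pred s : word k | abel s == mval m].
  rewrite (eq_bigr (fun=> F (abel s0) s0)) //.
  rewrite -[X in \sum_(s | X s) _]/(fun s => s \in [pred s : word k | abel s == abel s0]).
  by rewrite sumr_const -mulr_natl /F mulrA mulrA card_abel_class_mweight mul1r.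
by rewrite big_pred0 // /obs_class big_pred0 // (ip0l hY) mulr0.
Qed.

Lemma oblock_conj k x y : (oblock ipY C A k x y)^* = oblock ipY C A k y x.
Proof. by rewrite !oblockE rmorph_sum /=; apply: eq_bigr => s _; rewrite -(ipC hY). Qed.

Lemma oblock_ge0 k x : 0 <= oblock ipY C A k x x.
Proof. by rewrite oblockE sumr_ge0 // => s _; apply: ip_ge0. Qed.

Lemma oblock0 x y : oblock ipY C A 0 x y = ipY (C x) (C y).
Proof.
rewrite oblockE (big_pred1 [tuple]) ?obs_mean0 // => s.
by rewrite (tuple0 s); apply/esym/eqP.
Qed.

Lemma oblock_C_abelian k x y : C_abelian C A -> oblock ipY C A k x y = ncblock k x y.
Proof.
move=> CA; rewrite oblockE; apply: eq_bigr => s _.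
by rewrite !obs_meanE // => u us; rewrite /obs (CA _ _ us).
Qed.

Lemma sum_ip_mean_obs k x :
  \sum_(s : word k) ipY (obs_mean x s) (obs x s) = oblock ipY C A k x x.
Proof. by rewrite oblockE sum_ip_obs_mean // => u s /obs_mean_abel. Qed.

Lemma ncblock_sub_oblock k x : ncblock k x x - oblock ipY C A k x x =
  \sum_(s : word k) ipY (obs x s - obs_mean x s) (obs x s - obs_mean x s).
Proof.
have obs_mean : \sum_(s : word k) ipY (obs x s) (obs_mean x s) = oblock ipY C A k x x.
  rewrite -[RHS]oblock_conj -sum_ip_mean_obs rmorph_sum /=.
  by apply: eq_bigr => s _; rewrite -(ipC hY).
under [RHS]eq_bigr => s _ do rewrite (ipBl hY) !(ipBr hY).
rewrite !big_split /= !sumrN sumrB obs_mean sum_ip_mean_obs -oblockE /ncblock.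
ring.
Qed.

Definition oblock_defect k x : K := \sum_(i < d) \sum_(s : word k)
  ipY (obs_mean (A i x) s - obs_mean x (rcons_tuple s i))
      (obs_mean (A i x) s - obs_mean x (rcons_tuple s i)).

Lemma oblock_defect_ge0 k x : 0 <= oblock_defect k x.
Proof. by apply: sumr_ge0 => i _; apply: sumr_ge0 => s _; apply: ip_ge0. Qed.

Lemma oblock_defectE k x :
  \sum_(i < d) oblock ipY C A k (A i x) (A i x) - oblock ipY C A k.+1 x x
  = oblock_defect k x.
Proof.
have cross : \sum_(i < d) \sum_(s : word k)
    ipY (obs_mean x (rcons_tuple s i)) (obs_mean (A i x) s) = oblock ipY C A k.+1 x x.
  rewrite -sum_ip_mean_obs big_word_rcons; apply: eq_bigr => i _.
  rewrite sum_ip_obs_mean => [|u s us]; last first.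
    by apply: obs_mean_abel; apply/eqP; rewrite eq_abel_rcons us.
  by apply: eq_bigr => s _; rewrite /obs /= wact_rcons.
have cross' : \sum_(i < d) \sum_(s : word k)
    ipY (obs_mean (A i x) s) (obs_mean x (rcons_tuple s i)) = oblock ipY C A k.+1 x x.
  rewrite -[RHS]oblock_conj -cross rmorph_sum; apply: eq_bigr => i _.
  by rewrite rmorph_sum; apply: eq_bigr => s _; rewrite /= -(ipC hY).
have diag : \sum_(i < d) \sum_(s : word k)
    ipY (obs_mean x (rcons_tuple s i)) (obs_mean x (rcons_tuple s i))
    = oblock ipY C A k.+1 x x.
  by rewrite oblockE big_word_rcons.
have shifted : \sum_(i < d) oblock ipY C A k (A i x) (A i x) =
    \sum_(i < d) \sum_(s : word k) ipY (obs_mean (A i x) s) (obs_mean (A i x) s).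
  by apply: eq_bigr => i _; rewrite oblockE.
rewrite /oblock_defect.
under [RHS]eq_bigr => i _ do under eq_bigr => s _ do rewrite (ipBl hY) !(ipBr hY).
under [RHS]eq_bigr => i _ do rewrite !big_split /= !sumrN sumrB.
rewrite !big_split /= !sumrN sumrB cross cross' diag -shifted.
ring.
Qed.

Lemma C_abelian_obs_mean :
  (forall k x (s : word k), obs x s = obs_mean x s) -> C_abelian C A.
Proof.
move=> obs_mean_eq u v uv x.
have size_uv : size u == size v by rewrite -!mlen_abel uv.
have := obs_mean_eq _ x (Tuple size_uv).
have := obs_mean_eq _ x (Tuple (eqxx (size v))).
by rewrite /obs /= => -> ->; apply/obs_mean_abel/esym.
Qed.

Lemma obs_mean_rcons_C_abelian :
  (forall k x i (s : word k), obs_mean (A i x) s = obs_mean x (rcons_tuple s i)) ->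
  C_abelian C A.
Proof.
move=> mean_rcons; apply: C_abelian_obs_mean.
elim=> [|k IH] x s; first by rewrite obs_mean0.
have [i [t ->]] := word_rconsP s.
by rewrite -mean_rcons -IH /obs /= wact_rcons.
Qed.

Lemma opartial_conj N x y : (opartial ipY C A N x y)^* = opartial ipY C A N y x.
Proof. by rewrite rmorph_sum /=; apply: eq_bigr => k _; rewrite oblock_conj. Qed.

Lemma opartial_ge0 N x : 0 <= opartial ipY C A N x x.
Proof. by apply: sumr_ge0 => k _; apply: oblock_ge0. Qed.

Lemma opartialS N x y : opartial ipY C A N.+1 x y =
  ipY (C x) (C y) + \sum_(k < N.+1) oblock ipY C A k.+1 x y.
Proof. by rewrite /opartial big_ord_recl oblock0. Qed.

Lemma oblock_quad_ge0 c k x z : 0 <= c ->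
  0 <= c * c * oblock ipY C A k x x - c * oblock ipY C A k x z
       - c * oblock ipY C A k z x + oblock ipY C A k z z.
Proof.
move=> c_ge0; rewrite !oblockE !mulr_sumr -!sumrB -big_split /=.
apply: sumr_ge0 => s _; set u := obs_mean x s; set v := obs_mean z s.
have -> : c * c * ipY u u - c * ipY u v - c * ipY v u + ipY v v
          = ipY (c *: u - v) (c *: u - v).
  by rewrite (ipBl hY) !(ipBr hY) !(ipZl hY) !(ipZr hY) (geC0_conj c_ge0); ring.
exact: ip_ge0.
Qed.

Section GramianIdentities.
Variable G : X -> X.
Hypothesis hG : is_a_gramian ipX ipY C A G.

Lemma stein_ip x y : ipX (G x - \sum_(i < d) As i (G (A i x))) y
  = ipX (G x) y - \sum_(i < d) ipX (G (A i x)) (A i y).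
Proof.
rewrite (ipBl hX) (ip_suml hX); congr (_ - _).
by apply: eq_bigr => i _; rewrite (adjoint_ipl hX hX (hAs i)).
Qed.

Lemma sum_oblock_defect N x : \sum_(k < N.+1) oblock_defect k x =
  ipY (C x) (C x) + \sum_(i < d) opartial ipY C A N (A i x) (A i x)
  - opartial ipY C A N.+1 x x.
Proof.
rewrite opartialS; under eq_bigr => k _ do rewrite -oblock_defectE.
by rewrite sumrB /opartial exchange_big /=; ring.
Qed.

Lemma sum_oblock_defect_cvg x : sconverges (fun N => \sum_(k < N.+1) oblock_defect k x)
  (ipY (C x) (C x) + \sum_(i < d) ipX (G (A i x)) (A i x) - ipX (G x) x).
Proof.
apply: sconv_ext (fun N => esym (sum_oblock_defect N x)) _.
apply: sconvB (sconv_shift (hG x x)); apply: sconvD (sconv_cst _) _.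
by apply: sconv_sum => i; apply: hG.
Qed.

Lemma stein_le x : ipX (G x - \sum_(i < d) As i (G (A i x))) x <= ipX (Cs (C x)) x.
Proof.
rewrite stein_ip (adjoint_ipl hX hY hCs) -subr_ge0 opprB addrA.
apply: (sconv_ge0 (N0 := 0%N)) (sum_oblock_defect_cvg x) => N _.
by apply: sumr_ge0 => k _; apply: oblock_defect_ge0.
Qed.

Lemma stein_eq_C_abelian :
  (forall x, G x - \sum_(i < d) As i (G (A i x)) = Cs (C x)) -> C_abelian C A.
Proof.
move=> stein_eq; apply: obs_mean_rcons_C_abelian => k x i s.
have defect_cvg0 : sconverges (fun N => \sum_(k < N.+1) oblock_defect k x) 0.
  have defect0 :
      ipY (C x) (C x) + \sum_(i < d) ipX (G (A i x)) (A i x) - ipX (G x) x = 0.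
    have := congr1 (ipX^~ x) (stein_eq x).
    by rewrite /= stein_ip (adjoint_ipl hX hY hCs) => <-; ring.
  by rewrite -[X in sconverges _ X]defect0; apply: sum_oblock_defect_cvg.
have := series_ge0_cvg0 (oblock_defect_ge0^~ x) defect_cvg0 k.
move/psumr_eq0P => /(_ (fun i _ => sumr_ge0 _ (fun s _ => ip_ge0 hY _)) i isT).
move/psumr_eq0P => /(_ (fun s _ => ip_ge0 hY _) s isT).
by move/(ip_eq0 hY)/subr0_eq.
Qed.

Lemma C_abelian_stein_eq : C_abelian C A ->
  forall x, G x - \sum_(i < d) As i (G (A i x)) = Cs (C x).
Proof.
move=> CA x; apply: (ip_inj hX) => y; rewrite stein_ip (adjoint_ipl hX hY hCs).
suff -> : ipX (G x) y = ipY (C x) (C y) + \sum_(i < d) ipX (G (A i x)) (A i y) by ring.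
apply: sconv_uniq (sconv_shift (hG x y)) _.
apply: (sconv_ext (f := fun N => ipY (C x) (C y)
                          + \sum_(i < d) opartial ipY C A N (A i x) (A i y))).
  move=> N; rewrite opartialS exchange_big; congr (_ + _); apply: eq_bigr => k _.
  rewrite oblock_C_abelian // ncblockS.
  by apply: eq_bigr => i _; rewrite oblock_C_abelian.
by apply: sconvD (sconv_cst _) _; apply: sconv_sum => i; apply: hG.
Qed.

Lemma gramian_conj u v : ipX (G u) v = (ipX (G v) u)^*.
Proof.
apply: sconv_uniq (hG u v) _.
by apply: sconv_ext (sconv_conj (hG v u)) => N; rewrite opartial_conj.
Qed.

Lemma ncgramian_C_abelian :
  (forall x, vconverges ipX (fun N => ncpartial C Cs A As N x) (G x)) -> C_abelian C A.
Proof.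
move=> ncG; apply: C_abelian_obs_mean => k x s.
pose q j := ncblock j x x - oblock ipY C A j x x.
have q_ge0 j : 0 <= q j.
  by rewrite /q ncblock_sub_oblock; apply: sumr_ge0 => t _; apply: ip_ge0.
have q_cvg0 : sconverges (fun N => \sum_(j < N.+1) q j) 0.
  rewrite -[X in sconverges _ X](subrr (ipX (G x) x)).
  apply: sconv_ext (sconvB (vconv_ipl x hX (ncG x)) (hG x x)) => N.
  by rewrite ncpartial_ip /q sumrB.
have := series_ge0_cvg0 q_ge0 q_cvg0 k; rewrite /q ncblock_sub_oblock.
move/psumr_eq0P => /(_ (fun t _ => ip_ge0 hY _) s isT).
by move/(ip_eq0 hY)/subr0_eq.
Qed.

Definition gramian_tail N u v := ipX (G u) v - opartial ipY C A N u v.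

Lemma gramian_tail_quad_ge0 c N x z : 0 <= c ->
  0 <= c * c * gramian_tail N x x - c * gramian_tail N x z
       - c * gramian_tail N z x + gramian_tail N z z.
Proof.
move=> c_ge0; pose q k := c * c * oblock ipY C A k x x - c * oblock ipY C A k x z
                          - c * oblock ipY C A k z x + oblock ipY C A k z z.
have q_sum M : \sum_(k < M.+1) q k = c * c * opartial ipY C A M x x
    - c * opartial ipY C A M x z - c * opartial ipY C A M z x + opartial ipY C A M z z.
  by rewrite /q /opartial !big_split /= !sumrN -!mulr_sumr.
have q_cvg : sconverges (fun M => \sum_(k < M.+1) q k)
   (c * c * ipX (G x) x - c * ipX (G x) z - c * ipX (G z) x + ipX (G z) z).
  apply: sconv_ext (fun M => esym (q_sum M)) _.
  apply: sconvD (hG z z); apply: sconvB (sconvZ c (hG z x)).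
  exact: sconvB (sconvZ _ (hG x x)) (sconvZ c (hG x z)).
have := partial_sum_le_lim (fun k => oblock_quad_ge0 k x z c_ge0) q_cvg N.
by rewrite q_sum -subr_ge0 /gramian_tail; congr (0 <= _); ring.
Qed.

Lemma gramian_bounded : a_output_stable ipX ipY C A ->
  exists2 M : K, 0 < M & forall z, ipX (G z) z <= M * ipX z z.
Proof.
case=> M0 stab; exists (`|M0| + 1); first by rewrite ltr_pwDr.
move=> z; apply: (sconv_le (N0 := 0%N)) (hG z z) (sconv_cst _) => N _.
apply: le_trans (stab z N) _.
have M0z_ge0 : 0 <= M0 * ipX z z := le_trans (opartial_ge0 N z) (stab z N).
rewrite -(ger0_norm M0z_ge0) normrM (ger0_norm (ip_ge0 hX z)).
by rewrite ler_wpM2r ?(ip_ge0 hX) // lerDl.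
Qed.

Section CAbelian.
Hypothesis CA : C_abelian C A.
Variable M : K.
Hypotheses (M_gt0 : 0 < M) (GM : forall z, ipX (G z) z <= M * ipX z z).

Lemma C_abelian_ncpartial_err N x :
  ipX (G x - ncpartial C Cs A As N x) (G x - ncpartial C Cs A As N x)
  <= M * gramian_tail N x x.
Proof.
set z := G x - _; set r := ipX z z; set T := gramian_tail N x x.
have tail_x y : gramian_tail N x y = ipX z y.
  rewrite /gramian_tail /z (ipBl hX) ncpartial_ip; congr (_ - _).
  by apply: eq_bigr => k _; rewrite oblock_C_abelian.
have tail_zx : gramian_tail N z x = r.
  rewrite /gramian_tail gramian_conj -opartial_conj -rmorphB.
  by rewrite -/(gramian_tail N x z) tail_x /= -(ipC hX).
have tail_zz : gramian_tail N z z <= M * r.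
  by apply: le_trans (GM z); rewrite lerBlDr lerDl opartial_ge0.
(* Positivity of the tail form at [M x - z], whose cross terms are [r]. *)
have := gramian_tail_quad_ge0 N x z (ltW M_gt0); rewrite (tail_x z) tail_zx -/r -/T.
move=> quad; rewrite -subr_ge0 -(pmulr_rge0 _ M_gt0); apply: le_trans quad _.
rewrite -subr_ge0.
have -> : M * (M * T - r) - (M * M * T - M * r - M * r + gramian_tail N z z)
          = M * r - gramian_tail N z z by ring.
by rewrite subr_ge0.
Qed.

Lemma C_abelian_ncgramian x : vconverges ipX (fun N => ncpartial C Cs A As N x) (G x).
Proof.
move=> e e_gt0; have [N0 near] := hG x x (divr_gt0 e_gt0 M_gt0).
exists N0 => N /near near_N; rewrite -opprB (ipNl hX) (ipNr hX) opprK.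
have err := C_abelian_ncpartial_err N x.
have MT_ge0 := le_trans (ip_ge0 hX _) err; apply: le_lt_trans err _.
rewrite -(ger0_norm MT_ge0) normrM (gtr0_norm M_gt0) mulrC -ltr_pdivlMr //.
by rewrite /gramian_tail distrC.
Qed.

End CAbelian.

End GramianIdentities.

End ObservationsAlongWords.

Theorem proposition3p3 (R : realType) (d : nat)
  (X Y : lmodType R[i]) (ipX : X -> X -> R[i]) (ipY : Y -> Y -> R[i])
  (hX : is_hilbert ipX) (hY : is_hilbert ipY)
  (C : X -> Y) (Cs : Y -> X) (A As : 'I_d -> X -> X)
  (hC : bounded_linear ipX ipY C) (hCs : is_adjoint ipX ipY C Cs)
  (hA : forall i, bounded_linear ipX ipX (A i))
  (hAs : forall i, is_adjoint ipX ipX (A i) (As i))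
  (hstab : a_output_stable ipX ipY C A)
  (G : X -> X) (hG : is_a_gramian ipX ipY C A G) :
  (forall x : X,
     ipX (G x - \sum_(i < d) As i (G (A i x))) x <= ipX (Cs (C x)) x) /\
  [/\ ((forall x : X, G x - \sum_(i < d) As i (G (A i x)) = Cs (C x)) <->
         C_abelian C A),
      (C_abelian C A <->
         forall x : X, vconverges ipX (fun N => ncpartial C Cs A As N x) (G x)) &
      ((forall x : X, G x - \sum_(i < d) As i (G (A i x)) = Cs (C x)) <->
         forall x : X, vconverges ipX (fun N => ncpartial C Cs A As N x) (G x))].
Proof.
have [M M_gt0 GM] := gramian_bounded hX hY hG hstab.
have stein_abelian := conj (stein_eq_C_abelian hX hY hCs hAs hG)
                           (C_abelian_stein_eq hX hY hCs hAs hG).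
have abelian_nc : C_abelian C A <->
    forall x, vconverges ipX (fun N => ncpartial C Cs A As N x) (G x).
  split=> [CA|ncG]; last exact: (ncgramian_C_abelian hX hY hCs hAs hG ncG).
  exact: (C_abelian_ncgramian hX hY hCs hAs hG CA M_gt0 GM).
split; first exact: (stein_le hX hY hCs hAs hG).
by split=> //; apply: iff_trans stein_abelian abelian_nc.
Qed.
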